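(* Let $G$ be a group with a conjugation-closed generating set $X$ and let $g\in\mathrm{Mon}(X)$. The poset $\mathrm{Fact}(G,g,\mathbf I)$ is simplicial, i.e. each of its intervals $[\mathbf x,\mathbf y]$ (with $\mathbf x\le\mathbf y$) is isomorphic to a Boolean lattice.
   Context: $\mathrm{Mon}(X)$ is the generated submonoid; $\ell(x)$ is the minimal length of a product of elements of $X$ equal to $x$. A linear factorization of $g$ is a row vector $[x_L\ x_1\ \cdots\ x_k\ x_R]$ ($k\ge0$) of elements of $\mathrm{Mon}(X)$ with $x_1,\dots,x_k\ne1$ ($x_L,x_R$ may be trivial), $\ell(x_L)+\sum_i\ell(x_i)+\ell(x_R)=\ell(g)$ and $x_Lx_1\cdots x_kx_R=g$. With $x_0=x_L$, $x_{k+1}=x_R$, the merge at position $i\in\{0,\dots,k\}$ replaces consecutive entries $x_i,x_{i+1}$ by the single entry $x_ix_{i+1}$. $\mathrm{Fact}(G,g,\mathbf I)$ is the set of linear factorizations of $g$ ordered by $\mathbf x\le\mathbf y$ iff $\mathbf x$ is obtained from $\mathbf y$ by a finite sequence of merges. A Boolean lattice is the poset of all subsets of a finite set under inclusion. *)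

From Stdlib Require Import ClassicalEpsilon Relation_Operators.
From mathcomp Require Import all_boot.

Set Implicit Arguments.
Unset Strict Implicit.
Unset Printing Implicit Defensive.

Record group := Group {
  carrier :> Type;
  gmul : carrier -> carrier -> carrier;
  gone : carrier;
  ginv : carrier -> carrier;
  gmulA : forall a b c, gmul a (gmul b c) = gmul (gmul a b) c;
  gmul1 : forall a, gmul gone a = a;
  gmulr1 : forall a, gmul a gone = a;
  gmulV : forall a, gmul (ginv a) a = gone;
  gmulVr : forall a, gmul a (ginv a) = gone }.

Section Fact.
Variable G : group.
Local Notation "a * b" := (gmul a b).
Local Notation "1" := (gone G).

Definition gprod (s : seq G) : G := foldr (@gmul G) 1 s.

Definition conj_closed (X : G -> Prop) : Prop :=
  forall x h, X x -> X (ginv h * x * h).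

Definition generates (X : G -> Prop) : Prop :=
  forall g, exists s : seq G,
    (forall i, i < size s -> X (nth 1 s i) \/ X (ginv (nth 1 s i))) /\ gprod s = g.

Definition word_of (X : G -> Prop) (s : seq G) (x : G) : Prop :=
  (forall i, i < size s -> X (nth 1 s i)) /\ gprod s = x.

Definition Mon (X : G -> Prop) (x : G) : Prop := exists s, word_of X s x.

Definition is_min_len (X : G -> Prop) (x : G) (n : nat) : Prop :=
  (exists s, word_of X s x /\ size s = n) /\
  (forall s, word_of X s x -> n <= size s).

(* l(x): the minimal length (well-defined for x in Mon(X)) *)
Definition ell (X : G -> Prop) (x : G) : nat :=
  epsilon (inhabits 0%N) (is_min_len X x).

(* A linear factorization [x_L x_1 ... x_k x_R] of g is represented by the
   list [:: x_L, x_1, ..., x_k & [:: x_R]] (size k+2). *)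
Definition is_lin_fact (X : G -> Prop) (g : G) (s : seq G) : Prop :=
  [/\ 2 <= size s,
      (forall i, i < size s -> Mon X (nth 1 s i)),
      (forall i, 0 < i < (size s).-1 -> nth 1 s i <> 1),
      \sum_(a <- s) ell X a = ell X g
    & gprod s = g].

(* merge at position i (0 <= i <= k, i.e. i < size s - 1): replaces the
   consecutive entries x_i, x_{i+1} by x_i x_{i+1}. *)
Definition merge (i : nat) (s : seq G) : seq G :=
  take i s ++ (nth 1 s i * nth 1 s i.+1) :: drop i.+2 s.

Definition merge_step (t s : seq G) : Prop :=
  exists2 i, i < (size s).-1 & t = merge i s.

Definition Fact (X : G -> Prop) (g : G) : Type := {s : seq G | is_lin_fact X g s}.

Definition fact_le (X : G -> Prop) (g : G) (x y : Fact X g) : Prop :=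
  clos_refl_trans (seq G) merge_step (proj1_sig x) (proj1_sig y).

Definition interval (X : G -> Prop) (g : G) (x y : Fact X g) : Type :=
  {z : Fact X g | fact_le x z /\ fact_le z y}.

End Fact.

(* A poset P with order le is isomorphic to a Boolean lattice: there is a
   finite set (wlog {0,...,n-1}) and an order isomorphism from P onto the
   set of all its subsets ordered by inclusion. *)
Definition iso_Boolean_lattice (P : Type) (le : P -> P -> Prop) : Prop :=
  exists (n : nat) (f : P -> {set 'I_n}) (f' : {set 'I_n} -> P),
    [/\ cancel f f', cancel f' f &
        forall a b, le a b <-> f a \subset f b].

From Stdlib Require Import ClassicalEpsilon ProofIrrelevance.
From Stdlib Require Import Relation_Operators Operators_Properties.
From Pilot Require Import Defs.
From mathcomp Require Import all_boot zify.

Set Implicit Arguments.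
Unset Strict Implicit.
Unset Printing Implicit Defensive.

(* Write y = [x_L x_1 ... x_k x_R].  Every factorization obtained from y by
   merges is a coarsening of y, determined by which of the k+1 positions in
   front of x_1, ..., x_k, x_R still carry a block boundary, and a merge
   deletes one boundary.  Because the lengths along y add up to l(g) and l is
   subadditive, the lengths along any coarsening are the block sums of the
   lengths along y; as x_1, ..., x_k have positive length, distinct boundary
   sets give distinct factorizations.  So [x, y] is isomorphic to the boundary
   sets containing those of x, i.e. to all subsets of the boundaries of y that
   are missing in x. *)

Section Coarsening.
Variables (T : Type) (op : T -> T -> T).

(* [coarsen a c s] splits [a :: s] into blocks, multiplied out by [op], with a
   block starting at [s_i] iff [c_i] holds; missing bits count as [false]. *)
Fixpoint coarsen (a : T) (c : bitseq) (s : seq T) : seq T :=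
  match s with
  | [::] => [:: a]
  | x :: s' => if head false c then a :: coarsen x (behead c) s'
               else coarsen (op a x) (behead c) s'
  end.

Lemma size_coarsen a c s :
  size c = size s -> size (coarsen a c s) = (count id c).+1.
Proof. by elim: s a c => [|x s IHs] a [|[] c] //= [/IHs->]. Qed.

Lemma coarsen_all_cuts a s : coarsen a (nseq (size s) true) s = a :: s.
Proof. by elim: s a => [|x s IHs] a //=; rewrite IHs. Qed.

Lemma coarsen_opl (opA : associative op) u a c s :
  coarsen (op u a) c s =
  if coarsen a c s is h :: r then op u h :: r else [::].
Proof.
elim: s a c => [|x s IHs] a c //=.
by case: (head false c) => //; rewrite -opA IHs.
Qed.

End Coarsening.

Section CoarseningNat.

Definition pos_but_last (es : seq nat) := forall j, j.+1 < size es -> 0 < nth 0 es j.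

Local Notation coarsenn := (coarsen addn).

Lemma sumn_coarsen e c es : sumn (coarsenn e c es) = e + sumn es.
Proof.
elim: es e c => [|x es IHes] e c /=; first by rewrite !addn0.
by case: (head false c); rewrite /= IHes ?addnA.
Qed.

Lemma head_coarsen_ge e c es : e <= head 0 (coarsenn e c es).
Proof.
elim: es e c => [|x es IHes] e c //=; case: (head false c) => //=.
exact: leq_trans (leq_addr x e) (IHes _ _).
Qed.

Lemma coarsen_nat_inj es e c c' :
  size c = size es -> size c' = size es -> pos_but_last es ->
  coarsenn e c es = coarsenn e c' es -> c = c'.
Proof.
elim: es e c c' => [|x es IHes] e [|b c] [|b' c'] //= [sc] [sc'] pos.
have pos' : pos_but_last es by move=> j; apply: (pos j.+1).
(* a block boundary right after [e] cannot be matched by absorbing [x > 0] into [e] *)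
have cut_vs_merge d d' : size d = size es ->
    e :: coarsenn x d es <> coarsenn (e + x) d' es.
  case: es {IHes sc sc' pos'} pos => [|y es] pos sd E.
    by case: d d' sd E => [|? ?] [|? ?].
  have := head_coarsen_ge (e + x) d' (y :: es); rewrite -E /=.
  by have /= := pos 0 erefl; lia.
case: b b' => [] [] E.
- by case: E => /IHes ->.
- by case: (cut_vs_merge _ _ sc E).
- by case: (cut_vs_merge _ _ sc' (esym E)).
- by rewrite (IHes _ _ _ sc sc' pos' E).
Qed.

Lemma coarsen_nat_interior_pos es e c i :
  size c = size es -> pos_but_last es ->
  0 < i < (size (coarsenn e c es)).-1 -> 0 < nth 0 (coarsenn e c es) i.
Proof.
elim: es e c i => [|x es IHes] e [|b c] i //=; first by case: i.
move=> [sc] pos; have pos' : pos_but_last es by move=> j; apply: (pos j.+1).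
case: b => /=; last exact: IHes.
case: i => [|[|i]] //=.
- rewrite size_coarsen // => lt1.
  case: es {IHes pos'} pos sc => [|y es] pos sc; first by case: c sc lt1.
  exact: leq_trans (pos 0 erefl) (head_coarsen_ge _ _ _).
- move=> i_lt; apply: (IHes x c i.+1) => //.
  move: i_lt; case: (size _) => //= m; lia.
Qed.

End CoarseningNat.

Lemma leq_sumn_all2 u v : all2 leq u v -> sumn u <= sumn v.
Proof.
by elim: u v => [|m u IHu] [|n v] //= /andP[le_mn /IHu]; apply: leq_add.
Qed.

Lemma all2_leq_sumn_eq u v : all2 leq u v -> sumn v <= sumn u -> u = v.
Proof.
elim: u v => [|m u IHu] [|n v] //= /andP[le_mn le_uv] le_sum.
have le_uv_sum := leq_sumn_all2 le_uv.
have eq_mn : m = n by lia.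
by rewrite eq_mn (IHu v) //; lia.
Qed.

Definition le_bits (c c' : bitseq) := all2 implb c c'.

Lemma le_bits_refl c : le_bits c c.
Proof. by elim: c => //= b c ->; rewrite implybb. Qed.

Lemma le_bits_trans c1 c2 c3 : le_bits c1 c2 -> le_bits c2 c3 -> le_bits c1 c3.
Proof.
elim: c1 c2 c3 => [|b1 c1 IHc] [|b2 c2] [|b3 c3] //= /andP[b12 c12] /andP[b23 c23].
by rewrite (IHc _ _ c12 c23) andbT; case: b1 b2 b3 b12 b23 => [] [] [].
Qed.

Lemma size_le_bits c c' : le_bits c c' -> size c = size c'.
Proof. by elim: c c' => [|b c IHc] [|b' c'] //= /andP[_ /IHc->]. Qed.

Lemma le_bits_all c : le_bits c (nseq (size c) true).
Proof. by elim: c => //= b c ->; rewrite implybT. Qed.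

Lemma le_bitsP c c' : size c = size c' ->
  le_bits c c' <-> (forall i, nth false c i -> nth false c' i).
Proof.
elim: c c' => [|b c IHc] [|b' c'] //= [/IHc sc]; rewrite /le_bits /= -/(le_bits c c').
split=> [/andP[/implyP bb' /sc cc'] [|i] //|cc']; first exact: cc'.
apply/andP; split; first exact/implyP/(cc' 0).
by apply/sc => i; apply: (cc' i.+1).
Qed.

(* clears the [i]-th set bit, counting from 0 among the set bits *)
Fixpoint remove_cut (i : nat) (c : bitseq) : bitseq :=
  match c with
  | [::] => [::]
  | b :: c' => if b then (if i is i'.+1 then true :: remove_cut i' c' else false :: c')
               else false :: remove_cut i c'
  end.

Lemma size_remove_cut i c : size (remove_cut i c) = size c.
Proof. by elim: c i => [|[] c IHc] [|i] //=; rewrite IHc. Qed.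

Lemma le_remove_cut i c : le_bits (remove_cut i c) c.
Proof. by elim: c i => [|[] c IHc] [|i] //=; rewrite ?IHc ?le_bits_refl. Qed.

Fixpoint fill (cx d : bitseq) : bitseq :=
  match cx with
  | [::] => [::]
  | bx :: cx' => if bx then true :: fill cx' d else head false d :: fill cx' (behead d)
  end.

Definition free_bits (cx c : bitseq) := mask (map negb cx) c.

Lemma size_fill cx d : size (fill cx d) = size cx.
Proof. by elim: cx d => [|[] cx IHc] d //=; rewrite IHc. Qed.

Lemma le_fill cx d : le_bits cx (fill cx d).
Proof. by elim: cx d => [|[] cx IHc] d //=; rewrite IHc. Qed.

Lemma count_fill cx d : count id cx <= count id (fill cx d).
Proof.
elim: cx d => [|[] cx IHc] d //=; first by rewrite ltnS.
exact: leq_trans (IHc _) (leq_addl _ _).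
Qed.

Lemma fill_free_bits cx c : le_bits cx c -> fill cx (free_bits cx c) = c.
Proof.
rewrite /free_bits; elim: cx c => [|bx cx IHc] [|b c] //= /andP[bb /IHc {}IHc].
by case: bx bb => /= [->|_]; rewrite IHc.
Qed.

Lemma free_bits_fill cx d : size d = count negb cx -> free_bits cx (fill cx d) = d.
Proof.
rewrite /free_bits; elim: cx d => [|[] cx IHc] d /=; first by case: d.
  exact: IHc.
by case: d => [|b d] //= [/IHc->].
Qed.

Lemma size_free_bits cx c : size c = size cx -> size (free_bits cx c) = count negb cx.
Proof. by move=> sc; rewrite size_mask ?size_map // count_map. Qed.

Lemma le_free_bits cx c c' : le_bits cx c -> le_bits cx c' ->
  le_bits c c' = le_bits (free_bits cx c) (free_bits cx c').
Proof.
rewrite /free_bits; elim: cx c c' => [|bx cx IHc] [|b c] [|b' c'] //=.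
move=> /andP[bb cc] /andP[bb' cc'].
by case: bx bb bb' => /= [-> ->|_ _] /=; rewrite IHc.
Qed.

Definition bits_of_set n (S : {set 'I_n}) : bitseq := [seq k \in S | k <- enum 'I_n].

Definition set_of_bits n (d : bitseq) : {set 'I_n} := [set k : 'I_n | nth false d k].

Lemma size_bits_of_set n (S : {set 'I_n}) : size (bits_of_set S) = n.
Proof. by rewrite size_map size_enum_ord. Qed.

Lemma bits_of_setK n : cancel (@bits_of_set n) (set_of_bits n).
Proof.
move=> S; apply/setP => k.
by rewrite inE /bits_of_set (nth_map k) ?size_enum_ord // nth_ord_enum.
Qed.

Lemma set_of_bitsK n d : size d = n -> bits_of_set (set_of_bits n d) = d.
Proof.
move=> sd; apply: (@eq_from_nth _ false); first by rewrite size_bits_of_set.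
rewrite size_bits_of_set => i lt_i_n.
rewrite /bits_of_set (nth_map (Ordinal lt_i_n)) ?size_enum_ord //.
by rewrite -[i]/(nat_of_ord (Ordinal lt_i_n)) nth_ord_enum inE.
Qed.

Lemma subset_set_of_bits n d d' : size d = n -> size d' = n ->
  (set_of_bits n d \subset set_of_bits n d') <-> le_bits d d'.
Proof.
move=> sd sd'; rewrite le_bitsP ?sd ?sd' //; split=> [/subsetP sub i|sub].
  case: (ltnP i n) => [lt_i_n|]; last by move=> le_n_i; rewrite nth_default ?sd.
  by have := sub (Ordinal lt_i_n); rewrite !inE; apply.
by apply/subsetP => k; rewrite !inE; apply: sub.
Qed.

Section WordLength.
Variables (G : group) (X : G -> Prop).
Local Notation "a * b" := (gmul a b).
Local Notation "1" := (gone G).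
Local Notation ell := (ell X).

Lemma gprod_cat (s t : seq G) : gprod (s ++ t) = gprod s * gprod t.
Proof. by elim: s => [|u s IHs] /=; rewrite ?gmul1 // IHs gmulA. Qed.

Lemma ell_spec x : Mon X x -> is_min_len X x (ell x).
Proof.
move=> [s ws]; apply: epsilon_spec.
pose P n := exists t, word_of X t x /\ size t = n.
pose p n : bool := excluded_middle_informative (P n).
have exp : exists n, p n by exists (size s); apply/sumboolP; exists s.
case: (ex_minnP exp) => n /sumboolP [t [wt st]] min_n.
exists n; split=> [|u wu]; first by exists t.
by apply/min_n/sumboolP; exists u.
Qed.

Lemma ell_le s x : word_of X s x -> ell x <= size s.
Proof. by move=> ws; case: (ell_spec (ex_intro _ s ws)) => _; apply. Qed.

Lemma ell_word x : Mon X x -> exists2 s, word_of X s x & size s = ell x.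
Proof. by case/ell_spec => -[s [ws <-]]; exists s. Qed.

Lemma word_cat s t u v : word_of X s u -> word_of X t v -> word_of X (s ++ t) (u * v).
Proof.
move=> [Xs <-] [Xt <-]; split=> [i|]; last exact: gprod_cat.
rewrite size_cat nth_cat; case: (ltnP i (size s)) => [/Xs//|le_s_i lt_i].
by apply: Xt; rewrite -(ltn_add2l (size s)) subnKC.
Qed.

Lemma Mon1 : Mon X 1.
Proof. by exists [::]. Qed.

Lemma Mon_mul u v : Mon X u -> Mon X v -> Mon X (u * v).
Proof. by move=> [s ws] [t wt]; exists (s ++ t); apply: word_cat. Qed.

Lemma ell1 : ell 1 = 0.
Proof. by apply/eqP; rewrite -leqn0; apply: (@ell_le [::]). Qed.

Lemma ell_mul u v : Mon X u -> Mon X v -> ell (u * v) <= ell u + ell v.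
Proof.
move=> /ell_word[s ws <-] /ell_word[t wt <-].
by rewrite -size_cat; apply/ell_le/word_cat.
Qed.

Lemma ell_gt0 x : Mon X x -> x <> 1 -> 0 < ell x.
Proof. by move=> /ell_word[[|u s] [_ <-] <-]. Qed.

Fixpoint all_Mon (t : seq G) : Prop :=
  if t is u :: t' then Mon X u /\ all_Mon t' else True.

Lemma all_MonP t : all_Mon t <-> forall i, i < size t -> Mon X (nth 1 t i).
Proof.
elim: t => [|u t IHt] /=; first by split=> // _ [].
split=> [[Xu /IHt Xt] [|i] //|Xt]; first exact: Xt.
by split; [apply: (Xt 0) | apply/IHt => i; apply: (Xt i.+1)].
Qed.

Lemma Mon_gprod t : all_Mon t -> Mon X (gprod t).
Proof. by elim: t => [_|u t IHt [Xu /IHt]]; [apply: Mon1 | apply: Mon_mul]. Qed.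

Lemma ell_gprod t : all_Mon t -> ell (gprod t) <= sumn (map ell t).
Proof.
elim: t => [|u t IHt [Xu Xt]] /=; first by rewrite ell1.
exact: leq_trans (ell_mul Xu (Mon_gprod Xt)) (leq_add (leqnn _) (IHt Xt)).
Qed.

End WordLength.

Section GroupCoarsenings.
Variables (G : group) (X : G -> Prop).
Local Notation "a * b" := (gmul a b).
Local Notation ell := (ell X).
Local Notation coarseng := (coarsen (@gmul G)).
Local Notation merges := (clos_refl_trans (seq G) (@merge_step G)).

Lemma gprod_coarsen a c s : gprod (coarseng a c s) = a * gprod s.
Proof.
elim: s a c => [|x s IHs] a c /=; first by rewrite gmulr1.
by case: (head false c); rewrite /= IHs ?gmulA.
Qed.

Lemma all_Mon_coarsen a c s : Mon X a -> all_Mon X s -> all_Mon X (coarseng a c s).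
Proof.
elim: s a c => [|x s IHs] a c //= Xa [Xx Xs].
by case: (head false c) => /=; [split; last apply: IHs | apply/IHs/Xs/Mon_mul].
Qed.

Lemma ell_coarsen_le a n c s : Mon X a -> ell a <= n -> all_Mon X s ->
  all2 leq (map ell (coarseng a c s)) (coarsen addn n c (map ell s)).
Proof.
elim: s a n c => [|x s IHs] a n c /=; first by move=> _ ->.
move=> Xa le_an [Xx Xs]; case: (head false c) => /=; first by rewrite le_an IHs.
apply: IHs => //; first exact: Mon_mul.
by apply: leq_trans (ell_mul Xa Xx) _; rewrite leq_add2r.
Qed.

Lemma map_ell_coarsen a c s : Mon X a -> all_Mon X s ->
  ell (a * gprod s) = ell a + sumn (map ell s) ->
  map ell (coarseng a c s) = coarsen addn (ell a) c (map ell s).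
Proof.
move=> Xa Xs ell_add; apply: all2_leq_sumn_eq; first exact: ell_coarsen_le.
rewrite sumn_coarsen -ell_add -(gprod_coarsen a c s).
exact/ell_gprod/all_Mon_coarsen.
Qed.

Lemma merge_coarsen a c s i : size c = size s -> i < count id c ->
  Defs.merge i (coarseng a c s) = coarseng a (remove_cut i c) s.
Proof.
elim: s a c i => [|x s IHs] a [|[] c] i //= [sc]; last by move=> lt_i; rewrite IHs.
case: i => [|i] lt_i /=; last by rewrite -IHs.
rewrite (coarsen_opl (@gmulA G)).
case E: (coarseng x c s) => [|h r]; last by rewrite /Defs.merge /= drop0.
by have := size_coarsen (@gmul G) x sc; rewrite E.
Qed.

Lemma merges_cons a t t' : merges t t' -> merges (a :: t) (a :: t').
Proof.
elim=> [u v [i lt_i ->]|u|u v w _ uv _ vw]; [|exact: rt_refl|exact: rt_trans uv vw].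
by apply: rt_step; exists i.+1; move: lt_i; rewrite //= !ltn_predRL.
Qed.

Lemma merges_coarsen a c c' s : size c = size s -> le_bits c' c ->
  merges (coarseng a c' s) (coarseng a c s).
Proof.
elim: s a c c' => [|x s IHs] a c c'; first by move=> *; apply: rt_refl.
case: c c' => [|b c] [|b' c'] //= [sc] /andP[bb' le_c'c].
have sc' := etrans (size_le_bits le_c'c) sc.
case: b b' bb' => [] [] //= _; [exact/merges_cons/IHs | | exact: IHs].
apply: rt_trans (merges_cons a (IHs x _ _ sc le_c'c)).
apply: rt_step; exists 0; first by rewrite /= size_coarsen.
by have := @merge_coarsen a (true :: c') (x :: s) 0; rewrite /= sc' => <-.
Qed.

Lemma merges_to_coarsen a s t u : merges t u ->
  forall c, size c = size s -> u = coarseng a c s ->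
  exists2 c', size c' = size s /\ le_bits c' c & t = coarseng a c' s.
Proof.
move=> /clos_rt_rt1n_iff; elim=> [t0|t0 v w [i lt_i ->] _ IHv] c sc eq_u.
  by exists c; rewrite ?le_bits_refl.
have [c' [sc' le_c'c] eq_v] := IHv c sc eq_u; rewrite eq_v in lt_i *.
exists (remove_cut i c').
  by rewrite size_remove_cut; split; last exact: le_bits_trans (le_remove_cut _ _) le_c'c.
by apply: merge_coarsen; rewrite // -ltnS -(size_coarsen (@gmul G) a sc') -ltn_predRL.
Qed.

End GroupCoarsenings.

Section Interval.
Variables (G : group) (X : G -> Prop) (g a : G) (s : seq G).
Local Notation ell := (ell X).
Local Notation coarseng := (coarsen (@gmul G)).
Local Notation merges := (clos_refl_trans (seq G) (@merge_step G)).
Hypotheses (Xa : Mon X a) (Xs : all_Mon X s) (prod_as : gmul a (gprod s) = g).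
Hypotheses (ell_as : ell g = ell a + sumn (map ell s)) (pos_s : pos_but_last (map ell s)).

Let map_ell_coarsen_as c : map ell (coarseng a c s) = coarsen addn (ell a) c (map ell s).
Proof. by apply: map_ell_coarsen; rewrite ?prod_as. Qed.

Lemma is_lin_fact_coarsen c : size c = size s -> 0 < count id c ->
  is_lin_fact X g (coarseng a c s).
Proof.
move=> sc cut_c; split.
- by rewrite size_coarsen.
- exact/all_MonP/all_Mon_coarsen.
- move=> i i_int eq1; have sc' : size c = size (map ell s) by rewrite size_map.
  have := coarsen_nat_interior_pos (e:=ell a) (i:=i) sc' pos_s.
  rewrite -map_ell_coarsen_as size_map (nth_map (gone G)); last first.
    by case/andP: i_int => _ /leq_trans; apply; apply: leq_pred.
  by rewrite eq1 ell1 ltnn => /(_ i_int).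
- by rewrite -(big_map ell xpredT id) -sumnE map_ell_coarsen_as sumn_coarsen ell_as.
- by rewrite gprod_coarsen prod_as.
Qed.

Lemma coarsen_inj c c' : size c = size s -> size c' = size s ->
  coarseng a c s = coarseng a c' s -> c = c'.
Proof.
move=> sc sc' eq_cc'; apply: (@coarsen_nat_inj (map ell s) (ell a)); rewrite ?size_map //.
by rewrite -!map_ell_coarsen_as eq_cc'.
Qed.

Lemma merges_coarsenE c c' : size c = size s -> size c' = size s ->
  merges (coarseng a c s) (coarseng a c' s) <-> le_bits c c'.
Proof.
move=> sc sc'; split=> [|/(merges_coarsen a sc')//].
by case/merges_to_coarsen/(_ c' sc' erefl) => c'' [sc'' le_c''c'] /coarsen_inj ->.
Qed.

Definition cuts (t : seq G) : bitseq :=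
  epsilon (inhabits [::]) (fun c => size c = size s /\ t = coarseng a c s).

Lemma cutsP t : merges t (a :: s) -> size (cuts t) = size s /\ t = coarseng a (cuts t) s.
Proof.
move=> merges_t; rewrite /cuts; apply epsilon_spec.
have all_cuts := esym (coarsen_all_cuts (@gmul G) a s).
by have [c [sc _] ->] := merges_to_coarsen merges_t (size_nseq _ true) all_cuts; exists c.
Qed.

Variables (x y : Fact X g).
Hypotheses (y_as : sval y = a :: s) (le_xy : fact_le x y).

Let cx := cuts (sval x).
Let cw (w : interval x y) := cuts (sval (sval w)).
Let n := count negb cx.

Lemma cuts_xP : [/\ size cx = size s, sval x = coarseng a cx s & 0 < count id cx].
Proof.
have [sc sx] : size cx = size s /\ sval x = coarseng a cx s.
  by apply: cutsP; rewrite -y_as.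
have [two_le _ _ _ _] := svalP x.
by split=> //; move: two_le; rewrite sx size_coarsen.
Qed.

Lemma cuts_intervalP w :
  [/\ size (cw w) = size s, sval (sval w) = coarseng a (cw w) s & le_bits cx (cw w)].
Proof.
have [[x_le_w w_le_y] [sc sx _]] := (svalP w, cuts_xP).
have [sw sw_eq] : size (cw w) = size s /\ sval (sval w) = coarseng a (cw w) s.
  by apply: cutsP; rewrite -y_as.
by split=> //; apply/merges_coarsenE; rewrite // -sx -sw_eq.
Qed.

Definition filled (S : {set 'I_n}) := fill cx (bits_of_set S).

Lemma size_filled S : size (filled S) = size s.
Proof. by rewrite size_fill; case: cuts_xP. Qed.

Lemma count_filled_gt0 S : 0 < count id (filled S).
Proof. by case: cuts_xP => _ _ /leq_trans; apply; apply: count_fill. Qed.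

Definition fact_of_set (S : {set 'I_n}) : Fact X g :=
  exist _ _ (is_lin_fact_coarsen (size_filled S) (count_filled_gt0 S)).

Lemma fact_of_set_in_interval S : fact_le x (fact_of_set S) /\ fact_le (fact_of_set S) y.
Proof.
rewrite /fact_le /= y_as -(coarsen_all_cuts (@gmul G) a s).
have [sc -> _] := cuts_xP.
split; apply/merges_coarsenE; rewrite ?size_filled ?size_nseq ?le_fill //.
by rewrite -(size_filled S) le_bits_all.
Qed.

Definition of_set (S : {set 'I_n}) : interval x y := exist _ _ (fact_of_set_in_interval S).

Definition to_set (w : interval x y) : {set 'I_n} := set_of_bits n (free_bits cx (cw w)).

Lemma size_free_cuts w : size (free_bits cx (cw w)) = n.
Proof. by rewrite size_free_bits //; case: (cuts_intervalP w) => ->; case: cuts_xP. Qed.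

Lemma cw_of_set S : cw (of_set S) = filled S.
Proof.
have [sw eq_w _] := cuts_intervalP (of_set S).
exact: coarsen_inj sw (size_filled S) (esym eq_w).
Qed.

Theorem interval_iso_Boolean_lattice :
  iso_Boolean_lattice (fun u v : interval x y => fact_le (sval u) (sval v)).
Proof.
exists n, to_set, of_set; split.
- move=> w; apply: eq_sig_hprop => [? ? ?|]; first exact: proof_irrelevance.
  apply: eq_sig_hprop => [? ? ?|]; first exact: proof_irrelevance.
  have [_ eq_w le_xw] := cuts_intervalP w.
  by rewrite /= eq_w /filled /to_set set_of_bitsK ?size_free_cuts // fill_free_bits.
- move=> S; rewrite /to_set cw_of_set /filled free_bits_fill ?bits_of_setK //.
  by rewrite size_bits_of_set.
- move=> u v; rewrite /to_set subset_set_of_bits ?size_free_cuts //.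
  have [[su eq_u le_u] [sv eq_v le_v]] := (cuts_intervalP u, cuts_intervalP v).
  by rewrite -le_free_bits // /fact_le eq_u eq_v merges_coarsenE.
Qed.

End Interval.

Theorem proposition3p12 (G : group) (X : G -> Prop) (g : G)
  (hgen : generates X) (hconj : conj_closed X) (hg : Mon X g)
  (x y : Fact X g) (hxy : fact_le x y) :
  iso_Boolean_lattice
    (fun a b : interval x y => fact_le (proj1_sig a) (proj1_sig b)).
Proof.
have [size_y Mon_y nontriv_y ell_y prod_y] := svalP y.
case y_as: (sval y) size_y Mon_y nontriv_y ell_y prod_y => [//|a s] _.
move=> /all_MonP[Xa Xs] nontriv_y ell_y prod_y.
apply: (interval_iso_Boolean_lattice Xa Xs prod_y _ _ y_as hxy).
  by rewrite -ell_y big_cons -(big_map (ell X) xpredT id) -sumnE.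
move=> j; rewrite size_map => lt_j; rewrite (nth_map (gone G)) ?(ltnW lt_j) //.
apply: ell_gt0; last exact: (nontriv_y j.+1).
by move/all_MonP: Xs; apply; apply: ltnW.
Qed.
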